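(* In the setting described in the context, assume $x_h^2\beta>3$ and $n>\frac1{2\alpha x_h^2\beta}-\frac1{x_h^2\beta}$. Then there exists $\dot k>0$ such that for all $0<k\le\dot k$: $$(\hat\sigma^1_{(k+1)n})^2\le2(\hat\lambda\lambda^{n-1})^2\frac1\alpha(\hat\lambda\lambda^{n-1})^{2k},\qquad (\hat\sigma^{r}_{(k+1)n})^2\le6(\hat\lambda\lambda^{n-r})^2\frac1\alpha(\hat\lambda\lambda^{n-1})^{2k}\ \text{ for every } r\in\{2,\dots,n\}.$$
   Context: Fix $\alpha,\beta,x_h,c>0$ and an integer $n\ge2$. Model: $y=\theta x+\xi$, $\xi\sim\mathcal N(0,\beta^{-1})$, prior $\theta\sim\mathcal N(0,\alpha^{-1})$. Database $D_2$ consists of $n-1$ copies of $(x_h,cx_h)$ and one copy of $(x_h/2,cx_h/2)$. Cyclic SGLD with batch size 1 and step size $\eta=\frac2{(\alpha+nx_h^2\beta)^2}$: $\theta_0\sim\mathcal N(0,\alpha^{-1})$, $\theta_{j+1}=\theta_j+\frac\eta2[-\alpha\theta_j+n\beta(y_{i_j}-\theta_jx_{i_j})x_{i_j}]+\sqrt\eta\,\xi_j$ with $\xi_j\sim\mathcal N(0,1)$ i.i.d. independent of $\theta_0$; the database is shuffled once uniformly and its samples are then used cyclically. Let $r\in\{1,\dots,n\}$ be the position within each epoch at which $(x_h/2,cx_h/2)$ is used; conditionally on $r$ the $j$-th iterate is $\hat\theta^r_j\sim\mathcal N(\hat\mu^r_j,(\hat\sigma^r_j)^2)$. Set $\lambda=1-\frac\eta2(\alpha+nx_h^2\beta)$,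 $\hat\lambda=1-\frac\eta2(\alpha+n\frac{x_h^2}4\beta)$. *)

From Stdlib Require Import Reals Lra Lia Arith.
Open Scope R_scope.

Definition sgld_eta (alpha beta xh : R) (n : nat) : R :=
  2 / (alpha + INR n * xh ^ 2 * beta) ^ 2.

Definition sgld_lam (alpha beta xh : R) (n : nat) : R :=
  1 - sgld_eta alpha beta xh n / 2 * (alpha + INR n * xh ^ 2 * beta).

Definition sgld_lamh (alpha beta xh : R) (n : nat) : R :=
  1 - sgld_eta alpha beta xh n / 2 * (alpha + INR n * (xh ^ 2 / 4) * beta).

(* Input x used at (0-indexed) iteration j when the sample (x_h/2, c x_h/2)
   sits at position r (1-based) in each epoch of the cyclic order. *)
Definition sgld_x (xh : R) (n r j : nat) : R :=
  if Nat.eqb (S (j mod n)) r then xh / 2 else xh.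

(* One SGLD step, theta_{j+1} = a_j theta_j + b_j + sqrt eta xi_j with
   a_j = 1 - eta/2 (alpha + n beta x^2),  b_j = eta/2 n beta y x, y = c x. *)
Definition sgld_a (alpha beta xh : R) (n r j : nat) : R :=
  let x := sgld_x xh n r j in
  1 - sgld_eta alpha beta xh n / 2 * (alpha + INR n * beta * x ^ 2).

Definition sgld_b (alpha beta xh c : R) (n r j : nat) : R :=
  let x := sgld_x xh n r j in
  sgld_eta alpha beta xh n / 2 * INR n * beta * (c * x) * x.

(* Conditionally on r, theta_j ~ N(mu^r_j, (sigma^r_j)^2) where, since
   theta_0 ~ N(0, 1/alpha) and xi_j ~ N(0,1) are independent,
   mu_{j+1} = a_j mu_j + b_j  and  sigma_{j+1}^2 = a_j^2 sigma_j^2 + eta. *)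
Fixpoint sgld_mean (alpha beta xh c : R) (n r j : nat) : R :=
  match j with
  | O => 0
  | S j' => sgld_a alpha beta xh n r j' * sgld_mean alpha beta xh c n r j'
            + sgld_b alpha beta xh c n r j'
  end.

Fixpoint sgld_var (alpha beta xh : R) (n r j : nat) : R :=
  match j with
  | O => / alpha
  | S j' => (sgld_a alpha beta xh n r j') ^ 2 * sgld_var alpha beta xh n r j'
            + sgld_eta alpha beta xh n
  end.

From Stdlib Require Import Reals Lra Psatz Lia.
Open Scope R_scope.

(* Conditionally on r the variance obeys s_{j+1} = a_j^2 s_j + eta with a_j in [0, 1], so
   s_j <= (prod_{i<j} a_i^2) / alpha + j eta, and over k whole epochs the product equals
   P^(2k) with P = lamh lam^(n-1).  We take kd = 1; it then suffices that the noise of two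
   epochs is dominated, 2 n eta <= P^4 / alpha, i.e. 4 n alpha <= P^4 S^2 with
   S = alpha + n xh^2 beta.  Writing x = n / S <= 1/3 (because xh^2 beta > 3), Bernoulli gives
   P >= lam^n >= 1 - x and alpha = S (1 - xh^2 beta x), which reduces the claim to the
   polynomial inequality 4 x (1 - 3 x) <= (1 - x)^4.  For r >= 2 the bound follows since
   lamh lam^(n-r) >= P. *)

Lemma pow_unit_interval (l : R) (m : nat) : 0 <= l <= 1 -> 0 <= l ^ m <= 1.
Proof.
  intros Hl; split; [apply pow_le; lra|].
  rewrite <- (pow1 m); apply pow_incr; lra.
Qed.

Lemma Bernoulli_sub (y : R) (m : nat) : 0 <= y <= 1 -> 1 - INR m * y <= (1 - y) ^ m.
Proof.
  intros Hy; induction m as [|m IH]; [simpl; lra|].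
  rewrite S_INR, <- tech_pow_Rmult.
  assert (0 <= INR m) by apply pos_INR.
  assert ((1 - y) * (1 - INR m * y) <= (1 - y) * (1 - y) ^ m)
    by (apply Rmult_le_compat_l; lra).
  nra.
Qed.

(* (1 - x)^4 - 4 x (1 - 3 x) = (1 - 4 x + x^2)^2 + 4 x^3. *)
Lemma quartic_ge (x : R) : 0 <= x -> 4 * x * (1 - 3 * x) <= (1 - x) ^ 4.
Proof.
  intros Hx.
  assert (0 <= (1 - 4 * x + x ^ 2) ^ 2) by apply pow2_ge_0.
  assert (0 <= x ^ 3) by (apply pow_le; lra).
  nra.
Qed.

Lemma noise_le_contracted_prior (alpha q N P : R) :
  0 < alpha -> 3 <= q -> 0 <= N -> 1 - N / (alpha + N * q) <= P ->
  4 * N * alpha <= P ^ 4 * (alpha + N * q) ^ 2.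
Proof.
  intros Ha Hq HN HP.
  set (S := alpha + N * q) in *.
  assert (HS : 0 < S) by (unfold S; nra).
  set (x := N / S) in *.
  assert (HNx : N = S * x) by (unfold x; field; lra).
  assert (Hal : alpha = S * (1 - q * x)).
  { replace alpha with (S - N * q) at 1 by (unfold S; ring). unfold x; field; lra. }
  assert (Hx : 0 <= x <= 1 / 3).
  { split; [apply Rmult_le_pos; [lra | left; apply Rinv_0_lt_compat; lra]|].
    unfold x; apply Rmult_le_reg_r with S; [lra|].
    replace (N / S * S) with N by (field; lra).
    unfold S; nra. }
  assert ((1 - x) ^ 4 <= P ^ 4) by (apply pow_incr; lra).
  assert (4 * x * (1 - q * x) <= 4 * x * (1 - 3 * x)) by nra.
  pose proof (quartic_ge x (proj1 Hx)).
  rewrite Hal, HNx at 1.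
  assert (0 < S ^ 2) by nra.
  nra.
Qed.

Fixpoint sqprod (f : nat -> R) (m : nat) : R :=
  match m with O => 1 | S m' => f m' ^ 2 * sqprod f m' end.

Lemma sqprod_ext (f g : nat -> R) (m : nat) :
  (forall i, (i < m)%nat -> f i = g i) -> sqprod f m = sqprod g m.
Proof.
  induction m as [|m IH]; intros Hfg; simpl; [reflexivity|].
  rewrite Hfg, IH by first [lia | intros; apply Hfg; lia]; reflexivity.
Qed.

Lemma sqprod_add (f : nat -> R) (m p : nat) :
  sqprod f (m + p) = sqprod f m * sqprod (fun i => f (m + i)%nat) p.
Proof.
  induction p as [|p IH]; simpl.
  - rewrite Nat.add_0_r; ring.
  - rewrite Nat.add_succ_r; simpl; rewrite IH; ring.
Qed.

Lemma sqprod_periodic (f : nat -> R) (n k : nat) :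
  (forall i, f (i + n)%nat = f i) -> sqprod f (k * n) = sqprod f n ^ k.
Proof.
  intros Hper.
  assert (Hshift : forall m i, f (m * n + i)%nat = f i).
  { induction m as [|m IH]; intros i; [reflexivity|].
    replace (S m * n + i)%nat with (m * n + i + n)%nat by lia.
    rewrite Hper; apply IH. }
  induction k as [|k IH]; [reflexivity|].
  rewrite Nat.mul_succ_l, sqprod_add, IH.
  rewrite (sqprod_ext (fun i => f (k * n + i)%nat) f) by (intros; apply Hshift).
  simpl; ring.
Qed.

Lemma sqprod_const (f : nat -> R) (l : R) (m : nat) :
  (forall i, (i < m)%nat -> f i = l) -> sqprod f m = (l ^ 2) ^ m.
Proof.
  induction m as [|m IH]; intros Hf; simpl; [reflexivity|].
  rewrite Hf, IH by first [lia | intros; apply Hf; lia]; reflexivity.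
Qed.

Lemma sqprod_single (f : nat -> R) (h l : R) (i0 m : nat) :
  (i0 < m)%nat -> f i0 = h -> (forall i, (i < m)%nat -> i <> i0 -> f i = l) ->
  sqprod f m = h ^ 2 * (l ^ 2) ^ (m - 1).
Proof.
  induction m as [|m IH]; intros Hi0 Hh Hl; [lia|].
  simpl sqprod; replace (S m - 1)%nat with m by lia.
  destruct (Nat.eq_dec m i0) as [-> | Hne].
  - rewrite Hh, (sqprod_const f l) by (intros; apply Hl; lia); reflexivity.
  - rewrite Hl, IH by first [lia | assumption | intros; apply Hl; lia].
    replace m with (S (m - 1)) at 2 by lia; simpl; ring.
Qed.

Lemma var_recursion_bound (a v : nat -> R) (e : R) (j : nat) :
  (forall i, v (S i) = a i ^ 2 * v i + e) -> (forall i, a i ^ 2 <= 1) -> 0 <= e ->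
  v j <= sqprod a j * v O + INR j * e.
Proof.
  intros Hv Ha He; induction j as [|j IH]; [simpl; lra|].
  rewrite Hv, S_INR; simpl sqprod.
  specialize (Ha j).
  assert (0 <= a j ^ 2) by apply pow2_ge_0.
  assert (0 <= INR j * e) by (apply Rmult_le_pos; [apply pos_INR | lra]).
  assert (a j ^ 2 * v j <= a j ^ 2 * (sqprod a j * v O + INR j * e))
    by (apply Rmult_le_compat_l; lra).
  nra.
Qed.

Section SGLD.

Variables (alpha beta xh : R) (n : nat).
Hypothesis alpha_gt0 : 0 < alpha.
Hypothesis xh2beta_gt3 : 3 < xh ^ 2 * beta.
Hypothesis n_ge1 : (1 <= n)%nat.

Local Notation prec := (alpha + INR n * xh ^ 2 * beta).
Local Notation lam := (sgld_lam alpha beta xh n).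
Local Notation lamh := (sgld_lamh alpha beta xh n).

Lemma sgld_a_schedule (r j : nat) :
  sgld_a alpha beta xh n r j = if Nat.eqb (S (j mod n)) r then lamh else lam.
Proof.
  unfold sgld_a, sgld_x, sgld_lamh, sgld_lam; cbv zeta.
  destruct (Nat.eqb (S (j mod n)) r); field.
Qed.

Lemma sqprod_sgld_a (r k : nat) : (1 <= r <= n)%nat ->
  sqprod (sgld_a alpha beta xh n r) (k * n) = (lamh ^ 2 * (lam ^ 2) ^ (n - 1)) ^ k.
Proof.
  intros Hr.
  rewrite sqprod_periodic.
  - rewrite (sqprod_single _ lamh lam (r - 1)); [reflexivity | lia | |].
    + rewrite sgld_a_schedule, Nat.mod_small by lia.
      replace (S (r - 1)) with r by lia; now rewrite Nat.eqb_refl.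
    + intros i Hi Hne; rewrite sgld_a_schedule, Nat.mod_small by lia.
      destruct (Nat.eqb_spec (S i) r); [lia | reflexivity].
  - intros i; rewrite !sgld_a_schedule.
    replace (i + n)%nat with (i + 1 * n)%nat by lia.
    now rewrite Nat.Div0.mod_add.
Qed.

Lemma prec_gt3 : 3 < prec.
Proof.
  assert (1 <= INR n) by (apply (le_INR 1); lia).
  nra.
Qed.

Lemma sgld_eta_prec : sgld_eta alpha beta xh n = 2 / prec ^ 2.
Proof. reflexivity. Qed.

Lemma sgld_lam_prec : lam = 1 - 1 / prec.
Proof.
  pose proof prec_gt3.
  unfold sgld_lam; rewrite sgld_eta_prec; field; lra.
Qed.

Lemma sgld_lam_unit : 0 <= lam <= 1.
Proof.
  pose proof prec_gt3; rewrite sgld_lam_prec.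
  assert (0 < 1 / prec <= 1 / 3).
  { split; [apply Rdiv_lt_0_compat; lra|].
    apply Rmult_le_compat_l; [lra | apply Rinv_le_contravar; lra]. }
  lra.
Qed.

Lemma sgld_lam_le_lamh : lam <= lamh <= 1.
Proof.
  pose proof prec_gt3.
  assert (0 <= INR n) by apply pos_INR.
  assert (Hm : 0 <= alpha + INR n * (xh ^ 2 / 4) * beta <= prec) by nra.
  unfold sgld_lamh, sgld_lam; rewrite sgld_eta_prec.
  assert (0 < 2 / prec ^ 2 / 2) by (apply Rdiv_lt_0_compat; [apply Rdiv_lt_0_compat|]; nra).
  nra.
Qed.

Lemma sgld_epoch_factor_ge : 1 - INR n / prec <= lamh * lam ^ (n - 1).
Proof.
  pose proof prec_gt3; pose proof sgld_lam_unit; pose proof sgld_lam_le_lamh.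
  assert (Hpow : 0 <= lam ^ (n - 1)) by (apply pow_le; lra).
  assert (lam ^ n <= lamh * lam ^ (n - 1)).
  { replace (lam ^ n) with (lam * lam ^ (n - 1)) by (rewrite tech_pow_Rmult; f_equal; lia).
    nra. }
  assert (1 - INR n * (1 / prec) <= lam ^ n).
  { rewrite sgld_lam_prec; apply Bernoulli_sub.
    split; [left; apply Rdiv_lt_0_compat | apply Rmult_le_reg_r with prec;
      [| replace (1 / prec * prec) with 1 by (field; lra)]]; lra. }
  unfold Rdiv in *; lra.
Qed.

Lemma sgld_epoch_factor_le (r : nat) : (1 <= r <= n)%nat ->
  lamh * lam ^ (n - 1) <= lamh * lam ^ (n - r).
Proof.
  intros Hr; pose proof sgld_lam_unit; pose proof sgld_lam_le_lamh.
  replace (n - 1)%nat with (n - r + (r - 1))%nat by lia.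
  rewrite pow_add.
  pose proof (pow_unit_interval lam (r - 1) sgld_lam_unit).
  assert (0 <= lam ^ (n - r)) by (apply pow_le; lra).
  apply Rmult_le_compat_l; nra.
Qed.

Lemma sgld_var_two_epochs (r : nat) : (1 <= r <= n)%nat ->
  sgld_var alpha beta xh n r (2 * n) <= 2 * (lamh * lam ^ (n - 1)) ^ 4 / alpha.
Proof.
  intros Hr; pose proof prec_gt3; pose proof sgld_lam_unit; pose proof sgld_lam_le_lamh.
  set (P := lamh * lam ^ (n - 1)).
  eapply Rle_trans.
  { apply (var_recursion_bound (sgld_a alpha beta xh n r)); [reflexivity | |].
    - intros i; rewrite sgld_a_schedule.
      destruct (Nat.eqb _ _); rewrite <- (pow1 2); apply pow_incr; lra.
    - rewrite sgld_eta_prec; apply Rlt_le, Rdiv_lt_0_compat; nra. }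
  rewrite sqprod_sgld_a by assumption.
  replace ((lamh ^ 2 * (lam ^ 2) ^ (n - 1)) ^ 2) with (P ^ 4)
    by (unfold P; rewrite <- pow_mult, Nat.mul_comm, pow_mult; ring).
  simpl sgld_var; rewrite mult_INR, sgld_eta_prec; simpl INR.
  assert (Hkey : 4 * INR n * alpha <= P ^ 4 * prec ^ 2).
  { replace prec with (alpha + INR n * (xh ^ 2 * beta)) by ring.
    apply noise_le_contracted_prior; [lra | lra | apply pos_INR |].
    replace (alpha + INR n * (xh ^ 2 * beta)) with prec by ring.
    apply sgld_epoch_factor_ge. }
  assert (2 * INR n * (2 / prec ^ 2) <= P ^ 4 / alpha).
  { apply Rmult_le_reg_r with (alpha * prec ^ 2); [apply Rmult_lt_0_compat; nra|].
    replace (2 * INR n * (2 / prec ^ 2) * (alpha * prec ^ 2)) with (4 * INR n * alpha)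
      by (field; lra).
    replace (P ^ 4 / alpha * (alpha * prec ^ 2)) with (P ^ 4 * prec ^ 2) by (field; lra).
    exact Hkey. }
  unfold Rdiv in *; lra.
Qed.

Lemma sgld_var_two_epochs_shifted (r : nat) : (1 <= r <= n)%nat ->
  sgld_var alpha beta xh n r (2 * n)
    <= 2 * (lamh * lam ^ (n - r)) ^ 2 * (1 / alpha) * (lamh * lam ^ (n - 1)) ^ 2.
Proof.
  intros Hr; pose proof sgld_lam_unit; pose proof sgld_lam_le_lamh.
  eapply Rle_trans; [apply sgld_var_two_epochs, Hr|].
  set (P := lamh * lam ^ (n - 1)); set (Q := lamh * lam ^ (n - r)).
  assert (HP : 0 <= P) by (apply Rmult_le_pos; [|apply pow_le]; lra).
  assert (P ^ 2 <= Q ^ 2) by (apply pow_incr; split; [exact HP | apply sgld_epoch_factor_le, Hr]).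
  assert (0 <= P ^ 2 * / alpha)
    by (apply Rmult_le_pos; [apply pow2_ge_0 | left; apply Rinv_0_lt_compat; lra]).
  replace (2 * P ^ 4 / alpha) with (2 * (P ^ 2 * (P ^ 2 * / alpha))) by (unfold Rdiv; ring).
  replace (2 * Q ^ 2 * (1 / alpha) * P ^ 2) with (2 * (Q ^ 2 * (P ^ 2 * / alpha)))
    by (unfold Rdiv; ring).
  apply Rmult_le_compat_l, Rmult_le_compat_r; lra.
Qed.

End SGLD.

Theorem lemmaA3 (alpha beta xh c : R) (n : nat) :
  0 < alpha -> 0 < beta -> 0 < xh -> 0 < c -> (2 <= n)%nat ->
  xh ^ 2 * beta > 3 ->
  INR n > 1 / (2 * alpha * xh ^ 2 * beta) - 1 / (xh ^ 2 * beta) ->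
  let lam := sgld_lam alpha beta xh n in
  let lamh := sgld_lamh alpha beta xh n in
  exists kd : nat, (0 < kd)%nat /\
    forall k : nat, (0 < k <= kd)%nat ->
      sgld_var alpha beta xh n 1 ((k + 1) * n)
        <= 2 * (lamh * lam ^ (n - 1)) ^ 2 * (1 / alpha)
             * (lamh * lam ^ (n - 1)) ^ (2 * k)
      /\ forall r : nat, (2 <= r <= n)%nat ->
           sgld_var alpha beta xh n r ((k + 1) * n)
             <= 6 * (lamh * lam ^ (n - r)) ^ 2 * (1 / alpha)
                  * (lamh * lam ^ (n - 1)) ^ (2 * k).
Proof.
  intros Ha _ _ _ Hn Hq _; cbv zeta.
  assert (Hn1 : (1 <= n)%nat) by lia.
  pose proof (sgld_var_two_epochs_shifted alpha beta xh n Ha Hq Hn1) as Hvar.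
  exists 1%nat; split; [lia|]; intros k Hk.
  replace k with 1%nat by lia; replace ((1 + 1) * n)%nat with (2 * n)%nat by lia.
  split; [apply Hvar; lia|].
  intros r Hr; eapply Rle_trans; [apply Hvar; lia|].
  change (2 * 1)%nat with 2%nat.
  apply Rmult_le_compat_r; [apply pow2_ge_0|].
  apply Rmult_le_compat_r; [left; apply Rdiv_lt_0_compat; lra|].
  apply Rmult_le_compat_r; [apply pow2_ge_0 | lra].
Qed.
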